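(* Consider a budget-additive NSW instance with $v_{ij}\le c_i$ for all $i,j$ whose associated market ${\mathcal M}$ is money clearing, let $({\mathbf x},{\mathbf p})$ be a thrifty and modest equilibrium of ${\mathcal M}$, and let $v',c'$ be the normalized values and caps (see context), with normalized valuations $v'_i(S_i)=\min(c'_i,\sum_{j\in S_i}v'_{ij})$. Let $B_c$ be the set of buyers capped in $({\mathbf x},{\mathbf p})$. Then for every integral allocation $S^*$ (in particular one maximizing the Nash social welfare w.r.t. $v'$), $$\Big(\prod_{i\in B}v'_i(S^*_i)\Big)^{1/n}\le\Big(\prod_{i\in B_c}c'_i\prod_{j\in G:\,p_j>1}p_j\Big)^{1/n}.$$
   Context: Budget-additive NSW instance: agents $B$ ($|B|=n$), indivisible items $G$ ($|G|=m\ge n$), values $v_{ij}\ge0$, caps $c_i>0$, valuation $v_i(S_i)=\min(c_i,\sum_{j\in S_i}v_{ij})$; NSW of an allocation is $(\prod_i v_i(S_i))^{1/n}$. Associated market ${\mathcal M}$: Fisher market with buyer $i$ per agent, divisible unit-supply good $j$ per item, budget $m_i=1$, value $u_{ij}=v_{ij}$, utility cap $c_i$, earning cap $d_j=1$. Fisher market with earning and utility limits: buyers $B$, divisible goods $G$ each with unit supply; buyer $i$ has values $u_{ij}\ge0$, budget $m_i\ge0$, utility cap $c_i>0$; good $j$ has earning cap $d_j>0$. For a bundle ${\mathbf x}_i$ with $x_{ij}\ge0$, $u_i({\mathbf x}_i)=\min(c_i,\sum_j u_{ij}x_{ij})$. Given prices ${\mathbf p}\ge0$, the MBB ratio is $\alpha_i=\max_j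 u_{ij}/p_j$ ($0/0=0$, $u/0=\infty$ for $u>0$); $j$ is an MBB good of $i$ if $u_{ij}/p_j=\alpha_i$. A demand bundle maximizes $u_i({\mathbf x}_i)$ subject to $\sum_j p_jx_{ij}\le m_i$; thrifty: $x_{ij}>0$ only for MBB goods; modest: $\sum_ju_{ij}x_{ij}\le c_i$. Modest supply: $e_j=\min(1,d_j/p_j)$ ($=1$ if $p_j=0$). A thrifty and modest equilibrium is $({\mathbf x},{\mathbf p})$ with ${\mathbf p}\ge0$, $x_j=\sum_ix_{ij}\le e_j$, each ${\mathbf x}_i$ a thrifty and modest demand bundle, and $p_j(e_j-x_j)=0$. Buyer $i$ is capped if $u_i({\mathbf x}_i)=c_i$. Money clearing: for all $\hat B\subseteq B$, $\sum_{i\in\hat B}m_i\le\sum_{j\in N(\hat B)}d_j$, $N(\hat B)=\{j:u_{ij}>0\text{ for some }i\in\hat B\}$. Normalization: $G_0=\{j:p_j=0\}$, $B_0=\{i:v_{ij}>0\text{ for some }j\in G_0\}$. For $i\notin B_0$ with MBB ratio $\alpha_i$ at ${\mathbf p}$, $v'_{ij}=v_{ij}/\alpha_i$ and $c'_i=c_i/\alpha_i$; for $i\in B_0$, $v'_{ij}=v_{ij}$ and $c'_i=c_i$. *)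

From Stdlib Require Import Reals.
From mathcomp Require Import all_boot.
Set Implicit Arguments. Unset Strict Implicit. Unset Printing Implicit Defensive.

Open Scope R_scope.

Definition Reqb (x y : R) : bool := if Req_EM_T x y then true else false.
Definition Rltb (x y : R) : bool := if Rlt_dec x y then true else false.

Notation "\rsum_ ( i | P ) F" := (\big[Rplus/R0]_(i | P) F)
  (at level 41, F at level 41, i, P at level 50) : R_scope.
Notation "\rsum_ i F" := (\big[Rplus/R0]_i F)
  (at level 41, F at level 41, i at level 0) : R_scope.
Notation "\rprod_ ( i | P ) F" := (\big[Rmult/R1]_(i | P) F)
  (at level 36, F at level 36, i, P at level 50) : R_scope.
Notation "\rprod_ i F" := (\big[Rmult/R1]_i F)
  (at level 36, F at level 36, i at level 0) : R_scope.

Definition nroot (n : nat) (x : R) : R :=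
  if Req_EM_T x 0 then 0 else Rpower x (/ INR n).

(* Extended nonnegative reals, for bang-per-buck ratios (u/0 = oo for u > 0). *)
Inductive ext := Fin of R | Inf.
Definition ext_le (a b : ext) : Prop :=
  match a, b with
  | _, Inf => True
  | Inf, Fin _ => False
  | Fin x, Fin y => x <= y
  end.
Definition ext_max (a b : ext) : ext :=
  match a, b with
  | Inf, _ => Inf
  | _, Inf => Inf
  | Fin x, Fin y => Fin (Rmax x y)
  end.
(* ratio u/p with 0/0 = 0 and u/0 = oo for u > 0 (u >= 0 assumed) *)
Definition ratio (u p : R) : ext :=
  if Req_EM_T p 0 then (if Rlt_dec 0 u then Inf else Fin 0) else Fin (u / p).

Section Market.
Variables (B G : finType).

(* u : values, mb : budgets, c : utility caps, d : earning caps *)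

Definition mkt_utility (u : B -> G -> R) (c : B -> R) (i : B) (y : G -> R) : R :=
  Rmin (c i) (\rsum_j (u i j * y j)).

Definition spend (p : G -> R) (y : G -> R) : R := \rsum_j (p j * y j).

Definition mbb_ratio (u : B -> G -> R) (p : G -> R) (i : B) : ext :=
  \big[ext_max/Fin 0]_j ratio (u i j) (p j).

Definition is_mbb (u : B -> G -> R) (p : G -> R) (i : B) (j : G) : Prop :=
  ratio (u i j) (p j) = mbb_ratio u p i.

Definition demand_bundle (u : B -> G -> R) (mb c : B -> R) (p : G -> R)
    (i : B) (y : G -> R) : Prop :=
  (forall j, 0 <= y j) /\ spend p y <= mb i /\
  (forall z : G -> R, (forall j, 0 <= z j) -> spend p z <= mb i ->
      mkt_utility u c i z <= mkt_utility u c i y).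

Definition thrifty (u : B -> G -> R) (p : G -> R) (i : B) (y : G -> R) : Prop :=
  forall j, 0 < y j -> is_mbb u p i j.

Definition modest (u : B -> G -> R) (c : B -> R) (i : B) (y : G -> R) : Prop :=
  \rsum_j (u i j * y j) <= c i.

Definition modest_supply (d p : G -> R) (j : G) : R :=
  if Req_EM_T (p j) 0 then 1 else Rmin 1 (d j / p j).

Definition thrifty_modest_eq (u : B -> G -> R) (mb c : B -> R) (d : G -> R)
    (x : B -> G -> R) (p : G -> R) : Prop :=
  (forall j, 0 <= p j) /\
  (forall j, \rsum_i x i j <= modest_supply d p j) /\
  (forall i, demand_bundle u mb c p i (x i) /\ thrifty u p i (x i)
             /\ modest u c i (x i)) /\
  (forall j, p j * (modest_supply d p j - \rsum_i x i j) = 0).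

Definition capped (u : B -> G -> R) (c : B -> R) (x : B -> G -> R) (i : B) : bool :=
  Reqb (mkt_utility u c i (x i)) (c i).

Definition nbhd (u : B -> G -> R) (Bh : {set B}) : {set G} :=
  [set j | [exists i in Bh, Rltb 0 (u i j)]].

Definition money_clearing (u : B -> G -> R) (mb : B -> R) (d : G -> R) : Prop :=
  forall Bh : {set B}, \rsum_(i | i \in Bh) mb i <= \rsum_(j | j \in nbhd u Bh) d j.

(* associated market: budgets 1, values v, caps c, earning caps 1 *)
Definition one_B : B -> R := fun _ => 1.
Definition one_G : G -> R := fun _ => 1.

Definition ba_val (v : B -> G -> R) (c : B -> R) (i : B) (S : {set G}) : R :=
  Rmin (c i) (\rsum_(j | j \in S) v i j).

Definition allocation (S : B -> {set G}) : Prop :=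
  forall i k, i != k -> [disjoint S i & S k].

Definition NSW (v : B -> G -> R) (c : B -> R) (S : B -> {set G}) : R :=
  nroot #|B| (\rprod_i ba_val v c i (S i)).

Definition in_B0 (v : B -> G -> R) (p : G -> R) (i : B) : bool :=
  [exists j, Reqb (p j) 0 && Rltb 0 (v i j)].

Definition fin_part (a : ext) : R := match a with Fin r => r | Inf => 0 end.

Definition norm_v (v : B -> G -> R) (p : G -> R) (i : B) (j : G) : R :=
  if in_B0 v p i then v i j else v i j / fin_part (mbb_ratio v p i).

Definition norm_c (v : B -> G -> R) (c : B -> R) (p : G -> R) (i : B) : R :=
  if in_B0 v p i then c i else c i / fin_part (mbb_ratio v p i).

End Market.

From Stdlib Require Import Reals Lra Lia.
From HB Require Import structures.
From mathcomp Require Import all_boot.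
Set Implicit Arguments. Unset Strict Implicit. Unset Printing Implicit Defensive.
Open Scope R_scope.

(* Proof idea: after normalization every buyer outside B_0 values each good at
   most at its price, v'_ij <= p_j, and a capped such buyer has c'_i equal to
   its spending s_i; buyers in B_0 are capped and spend nothing.  With
   P_i = prod_{j in S_i} max(p_j,1) and g_i = sum_{j in S_i} min(p_j,1) we have
   sum_{j in S_i} p_j <= P_i g_i, and the inequalities min(s,g) <= s e^{g-s}
   (0 < s <= 1) and g <= e^{g-s} (s <= 1) give
     v'_i(S_i) <= P_i * (c'_i if i is capped, else 1) * e^{g_i - s_i}.
   Multiplying over the buyers, the bundles are disjoint, so prod_i P_i is at
   most the product of the prices above 1, while sum_i g_i <= sum_j min(p_j,1),
   which is the total spending sum_i s_i since good j earns min(p_j,1) in a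
   thrifty and modest equilibrium with earning caps 1.  Hence the exponential
   factor is at most 1. *)

HB.instance Definition _ := Monoid.isComLaw.Build R R0 Rplus
  (fun a b c => esym (Rplus_assoc a b c)) Rplus_comm Rplus_0_l.
HB.instance Definition _ := Monoid.isComLaw.Build R R1 Rmult
  (fun a b c => esym (Rmult_assoc a b c)) Rmult_comm Rmult_1_l.

Lemma ReqbP x y : reflect (x = y) (Reqb x y).
Proof. by rewrite /Reqb; case: Req_EM_T => ?; constructor. Qed.

Lemma RltbP x y : reflect (x < y) (Rltb x y).
Proof. by rewrite /Rltb; case: Rlt_dec => ?; constructor. Qed.

Section BigR.
Variables (I : Type) (r : seq I) (P : pred I).

Lemma Rsum_le (F1 F2 : I -> R) :
  (forall i, P i -> F1 i <= F2 i) ->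
  \big[Rplus/R0]_(i <- r | P i) F1 i <= \big[Rplus/R0]_(i <- r | P i) F2 i.
Proof. by move=> H; apply: (big_ind2 (fun a b => a <= b)) => *; lra || exact: H. Qed.

Lemma Rsum_ge0 (F : I -> R) :
  (forall i, P i -> 0 <= F i) -> 0 <= \big[Rplus/R0]_(i <- r | P i) F i.
Proof. by move=> H; apply: (big_ind (fun a => 0 <= a)) => *; lra || exact: H. Qed.

Lemma Rprod_ge0 (F : I -> R) :
  (forall i, P i -> 0 <= F i) -> 0 <= \big[Rmult/R1]_(i <- r | P i) F i.
Proof.
move=> H; apply: (big_ind (fun a => 0 <= a)) => *; [lra | nra | exact: H].
Qed.

Lemma Rprod_ge1 (F : I -> R) :
  (forall i, P i -> 1 <= F i) -> 1 <= \big[Rmult/R1]_(i <- r | P i) F i.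
Proof.
move=> H; apply: (big_ind (fun a => 1 <= a)) => *; [lra | nra | exact: H].
Qed.

Lemma Rprod_le (F1 F2 : I -> R) :
  (forall i, P i -> 0 <= F1 i <= F2 i) ->
  \big[Rmult/R1]_(i <- r | P i) F1 i <= \big[Rmult/R1]_(i <- r | P i) F2 i.
Proof.
move=> H; suff [] : 0 <= \big[Rmult/R1]_(i <- r | P i) F1 i <=
                        \big[Rmult/R1]_(i <- r | P i) F2 i by [].
by apply: (big_ind2 (fun a b => 0 <= a <= b)) => *; [lra | nra | exact: H].
Qed.

Lemma Rsum_mull (a : R) (F : I -> R) :
  a * \big[Rplus/R0]_(i <- r | P i) F i = \big[Rplus/R0]_(i <- r | P i) (a * F i).
Proof. by apply: big_morph => [x y|]; ring. Qed.

Lemma exp_Rsum (F : I -> R) :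
  exp (\big[Rplus/R0]_(i <- r | P i) F i) = \big[Rmult/R1]_(i <- r | P i) exp (F i).
Proof. by apply: big_morph; [exact: exp_plus | exact: exp_0]. Qed.

(* Each p_j equals max(p_j,1) * min(p_j,1), and every factor max(p_j,1) is
   at most the whole product of them. *)
Lemma Rsum_le_Rprod_Rmax_Rsum_Rmin (p : I -> R) :
  (forall i, 0 <= p i) ->
  \big[Rplus/R0]_(i <- r | P i) p i <=
  \big[Rmult/R1]_(i <- r | P i) Rmax (p i) 1 *
  \big[Rplus/R0]_(i <- r | P i) Rmin (p i) 1.
Proof.
move=> Hp.
suff [_ [_ [_ ]]] : 0 <= \big[Rplus/R0]_(i <- r | P i) p i /\
  1 <= \big[Rmult/R1]_(i <- r | P i) Rmax (p i) 1 /\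
  0 <= \big[Rplus/R0]_(i <- r | P i) Rmin (p i) 1 /\
  \big[Rplus/R0]_(i <- r | P i) p i <=
  \big[Rmult/R1]_(i <- r | P i) Rmax (p i) 1 *
  \big[Rplus/R0]_(i <- r | P i) Rmin (p i) 1 by [].
apply: (big_ind3 (fun a m g => 0 <= a /\ 1 <= m /\ 0 <= g /\ a <= m * g)).
- lra.
- by move=> a1 m1 g1 a2 m2 g2 [? [? [? ?]]] [? [? [? ?]]]; do !split; nra.
- move=> i _; have := Hp i; rewrite /Rmax /Rmin.
  by case: Rle_dec => ?; do !split; nra.
Qed.

End BigR.

Section DisjointFamily.
Variables (I T : finType) (S : I -> {set T}).
Hypothesis HS : allocation S.

Lemma Rsum_disjoint_le (F : T -> R) :
  (forall j, 0 <= F j) -> \rsum_i \rsum_(j | j \in S i) F j <= \rsum_j F j.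
Proof.
move=> HF; rewrite -partition_disjoint_bigcup // big_mkcond.
by apply: Rsum_le => j _; case: (_ \in _); [lra | exact: HF].
Qed.

Lemma Rprod_disjoint_le (F : T -> R) :
  (forall j, 1 <= F j) -> \rprod_i \rprod_(j | j \in S i) F j <= \rprod_j F j.
Proof.
move=> HF; rewrite -partition_disjoint_bigcup // big_mkcond.
by apply: Rprod_le => j _; have := HF j; case: (_ \in _); lra.
Qed.

End DisjointFamily.

Section ExtendedMax.
Variables (T : eqType) (s : seq T) (F : T -> ext).

Lemma ext_le_trans a b d : ext_le a b -> ext_le b d -> ext_le a d.
Proof. by case: a; case: b; case: d => //= *; lra. Qed.

Lemma ext_le_big j : j \in s -> ext_le (F j) (\big[ext_max/Fin 0]_(k <- s) F k).
Proof.
have max_ge_l a b : ext_le a (ext_max a b) by case: a; case: b => //= *; exact: Rmax_l.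
have max_ge_r a b : ext_le b (ext_max a b) by case: a; case: b => //= *; exact: Rmax_r.
elim: s => // a t IH; rewrite inE big_cons => /orP [/eqP <- | /IH Hj] //.
exact: ext_le_trans Hj (max_ge_r _ _).
Qed.

Lemma ext_max_big_Inf j :
  j \in s -> F j = Inf -> \big[ext_max/Fin 0]_(k <- s) F k = Inf.
Proof. by move=> /ext_le_big; case: (\big[_/_]_(k <- s) _) => // ? /[swap] ->. Qed.

End ExtendedMax.

(* Also for b = 0, since x / 0 = 0 in [R]. *)
Lemma Rdiv_ge0 a b : 0 <= a -> 0 <= b -> 0 <= a / b.
Proof.
move=> Ha [Hb | <-]; last by rewrite Rdiv_0_r; lra.
by apply: Rmult_le_pos => //; left; exact: Rinv_0_lt_compat.
Qed.

Lemma ratio_Fin u q : q <> 0 -> ratio u q = Fin (u / q).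
Proof. by rewrite /ratio; case: Req_EM_T. Qed.

Lemma ratio_free u : 0 < u -> ratio u 0 = Inf.
Proof. by rewrite /ratio; case: Req_EM_T => ? //=; case: Rlt_dec. Qed.

Lemma ratio0 q : ratio 0 q = Fin 0.
Proof.
rewrite /ratio; case: Req_EM_T => ? /=; last by rewrite /Rdiv Rmult_0_l.
by case: Rlt_dec => /= [|_]; first lra.
Qed.

Lemma ratio_Inf u q : ratio u q = Inf -> q = 0.
Proof. by rewrite /ratio; case: Req_EM_T. Qed.

Lemma fin_part_ratio_ge0 u q : 0 <= u -> 0 <= q -> 0 <= fin_part (ratio u q).
Proof.
move=> Hu Hq; rewrite /ratio; case: Req_EM_T => ? /=; last exact: Rdiv_ge0.
by case: Rlt_dec => /= _; lra.
Qed.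

Lemma exp_le x y : x <= y -> exp x <= exp y.
Proof. by case=> [/exp_increasing | ->]; lra. Qed.

Lemma le_exp_sub g s : s <= 1 -> g <= exp (g - s).
Proof.
move=> Hs; have := exp_ineq1_le (g - 1).
have : g - 1 <= g - s by lra.
move=> /exp_le; lra.
Qed.

(* For g < s use g/s <= e^{g/s - 1} and (g - s)/s <= g - s. *)
Lemma Rmin_le_mul_exp s g : 0 < s <= 1 -> Rmin s g <= s * exp (g - s).
Proof.
move=> Hs; rewrite /Rmin; case: Rle_dec => Hsg.
  by have := exp_ineq1_le (g - s); nra.
have Hdiv : (g - s) / s <= g - s.
  have -> : (g - s) / s = (g - s) * / s by [].
  have : 1 <= / s by rewrite -Rinv_1; apply: Rinv_le_contravar; lra.
  nra.
have Hratio : g / s <= exp (g - s).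
  have := exp_ineq1_le ((g - s) / s); have := exp_le Hdiv.
  have -> : 1 + (g - s) / s = g / s by field; lra.
  lra.
have {1}-> : g = s * (g / s) by field; lra.
by apply: Rmult_le_compat_l; lra.
Qed.

Lemma nroot_ge0 n x : 0 <= nroot n x.
Proof.
by rewrite /nroot /Rpower; case: Req_EM_T => ? /=; [lra | left; exact: exp_pos].
Qed.

Lemma nroot_le n x y : 0 <= x <= y -> nroot n x <= nroot n y.
Proof.
move=> [Hx Hxy]; rewrite {1}/nroot.
case: Req_EM_T => [? | Hx0] /=; first exact: nroot_ge0.
rewrite /nroot; case: Req_EM_T => Hy0 /=; first lra.
apply: exp_le; apply: Rmult_le_compat_l.
  case: n => [|n]; first by rewrite Rinv_0; lra.
  by left; apply/Rinv_0_lt_compat/lt_0_INR; lia.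
by case: (Rle_lt_or_eq_dec _ _ Hxy) => [/ln_increasing | ->]; lra.
Qed.

Lemma ba_val_ge0 (B G : finType) (v : B -> G -> R) (c : B -> R) i S :
  (forall i j, 0 <= v i j) -> (forall i, 0 <= c i) -> 0 <= ba_val v c i S.
Proof.
move=> Hv Hc; apply: Rmin_glb; first exact: Hc.
by apply: Rsum_ge0 => j _; exact: Hv.
Qed.

Section Normalization.
Variables (B G : finType) (v : B -> G -> R) (c : B -> R) (p : G -> R).
Hypothesis Hv : forall i j, 0 <= v i j.
Hypothesis Hc : forall i, 0 < c i.
Hypothesis Hp : forall j, 0 <= p j.

Lemma fin_part_mbb_ratio_ge0 i : 0 <= fin_part (mbb_ratio v p i).
Proof.
apply: (big_ind (fun e => 0 <= fin_part e)) => [/=|[a|] [b|] //=|j _]; try lra.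
  by move=> Ha Hb; apply: Rle_trans (Rmax_l _ _).
exact: fin_part_ratio_ge0.
Qed.

Lemma norm_v_ge0 i j : 0 <= norm_v v p i j.
Proof.
rewrite /norm_v; case: in_B0; first exact: Hv.
exact: Rdiv_ge0 (fin_part_mbb_ratio_ge0 i).
Qed.

Lemma norm_c_ge0 i : 0 <= norm_c v c p i.
Proof.
have := Hc i; rewrite /norm_c; case: in_B0 => ?; first lra.
by apply: Rdiv_ge0 (fin_part_mbb_ratio_ge0 i); lra.
Qed.

Section Buyer.
Variable i : B.

Lemma mbb_ratio_in_B0 : in_B0 v p i -> mbb_ratio v p i = Inf.
Proof.
move=> /existsP [j /andP [/ReqbP Hpj /RltbP Hvj]].
apply: (ext_max_big_Inf (mem_index_enum j)).
by rewrite Hpj ratio_free.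
Qed.

Lemma spend_thrifty_in_B0 y :
  in_B0 v p i -> thrifty v p i y -> (forall j, 0 <= y j) -> spend p y = 0.
Proof.
move=> /mbb_ratio_in_B0 Hinf Hthr Hy; rewrite /spend big1 // => j _.
case: (Rle_lt_or_eq_dec _ _ (Hy j)) => [/Hthr | <-]; last by ring.
by rewrite /is_mbb Hinf => /ratio_Inf ->; ring.
Qed.

(* A zero-price good of positive value buys the whole cap at no cost. *)
Lemma capped_in_B0 (x : B -> G -> R) :
  in_B0 v p i -> demand_bundle v (@one_B B) c p i (x i) -> capped v c x i.
Proof.
move=> /existsP [j0 /andP [/ReqbP Hp0 /RltbP Hv0]] [_ [_ Hopt]].
pose z k := if k == j0 then c i / v i j0 else 0.
have Hz k : 0 <= z k.
  by rewrite /z; case: eqP => _; [apply: Rdiv_ge0; have := Hc i | ]; lra.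
have Hspend : spend p z <= 1.
  rewrite /spend big1 => [|k _]; first by rewrite /one_B; lra.
  by rewrite /z; case: eqP => [->|_]; [rewrite Hp0 | ]; ring.
have Hutil : mkt_utility v c i z = c i.
  rewrite /mkt_utility (bigD1 j0) //= big1 => [|k /negbTE Hk]; last first.
    by rewrite /z Hk; ring.
  rewrite /z eqxx Rplus_0_r; have -> : v i j0 * (c i / v i j0) = c i by field; lra.
  by rewrite Rmin_left //; lra.
apply/ReqbP; have := Hopt z Hz Hspend; rewrite Hutil.
have := Rmin_l (c i) (\rsum_j (v i j * x i j)); rewrite /mkt_utility; lra.
Qed.

Hypothesis HB0 : ~~ in_B0 v p i.

Let alpha := fin_part (mbb_ratio v p i).

Lemma value_free_not_B0 j : p j = 0 -> v i j = 0.
Proof.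
move=> Hpj; case: (Rle_lt_or_eq_dec _ _ (Hv i j)) => // Hvj.
by move/existsP: HB0; case; exists j; apply/andP; split; [apply/ReqbP | apply/RltbP].
Qed.

(* With 0/0 = 0 in [R] the ratio is finite for every good. *)
Lemma ratio_not_B0 j : ratio (v i j) (p j) = Fin (v i j / p j).
Proof.
case: (Req_EM_T (p j) 0) => [Hpj | /ratio_Fin //].
by rewrite value_free_not_B0 // ratio0 Hpj Rdiv_0_r.
Qed.

Lemma mbb_ratio_not_B0 : mbb_ratio v p i = Fin alpha.
Proof.
rewrite /alpha; suff [a ->] : exists a, mbb_ratio v p i = Fin a by [].
apply: (big_ind (fun e => exists a, e = Fin a)) => [|_ _ [a ->] [b ->]|j _].
- by exists 0.
- by exists (Rmax a b).
- by rewrite ratio_not_B0; eexists.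
Qed.

Lemma value_eq_price j : v i j / p j = alpha -> v i j = alpha * p j.
Proof.
move=> <-; case: (Req_EM_T (p j) 0) => [Hpj | Hpj].
  by rewrite value_free_not_B0 // Hpj; ring.
by field.
Qed.

Lemma value_le_price j : v i j <= alpha * p j.
Proof.
have := ext_le_big (fun k => ratio (v i k) (p k)) (mem_index_enum j).
rewrite -/(mbb_ratio v p i) mbb_ratio_not_B0 ratio_not_B0 /= => Hle.
case: (Req_EM_T (p j) 0) => [Hpj | Hpj].
  by rewrite value_free_not_B0 // Hpj; lra.
have -> : v i j = (v i j / p j) * p j by field.
by apply: Rmult_le_compat_r; [exact: Hp | exact: Hle].
Qed.

Lemma norm_v_le_price j : norm_v v p i j <= p j.
Proof.
rewrite /norm_v (negbTE HB0) -/alpha.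
have Halpha : 0 <= alpha := fin_part_mbb_ratio_ge0 i.
case: (Rle_lt_or_eq_dec _ _ Halpha) => [Hpos | <-]; last by rewrite Rdiv_0_r.
apply: (Rmult_le_reg_l alpha) => //.
have -> : alpha * (v i j / alpha) = v i j by field; lra.
exact: value_le_price.
Qed.

Lemma utility_thrifty_not_B0 y :
  thrifty v p i y -> (forall j, 0 <= y j) ->
  \rsum_j (v i j * y j) = alpha * spend p y.
Proof.
move=> Hthr Hy; rewrite /spend Rsum_mull; apply: eq_bigr => j _.
case: (Rle_lt_or_eq_dec _ _ (Hy j)) => [/Hthr | <-]; last by ring.
rewrite /is_mbb ratio_not_B0 mbb_ratio_not_B0 => -[/value_eq_price ->]; ring.
Qed.

Section Capped.
Variable x : B -> G -> R.
Hypotheses (Hthr : thrifty v p i (x i)) (Hx : forall j, 0 <= x i j).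
Hypotheses (Hmod : modest v c i (x i)) (Hcap : capped v c x i).

Lemma cap_eq_alpha_spend : c i = alpha * spend p (x i).
Proof.
move: Hmod Hcap => /[swap] /ReqbP.
rewrite /mkt_utility /modest utility_thrifty_not_B0 //.
by rewrite /Rmin; case: Rle_dec => ?; lra.
Qed.

Lemma spend_gt0_capped_not_B0 : 0 < spend p (x i).
Proof.
have := Hc i; have := fin_part_mbb_ratio_ge0 i; rewrite cap_eq_alpha_spend -/alpha.
have : 0 <= spend p (x i) by apply: Rsum_ge0 => j _; have := Hp j; have := Hx j; nra.
nra.
Qed.

Lemma norm_c_capped_not_B0 : norm_c v c p i = spend p (x i).
Proof.
rewrite /norm_c (negbTE HB0) -/alpha cap_eq_alpha_spend.
have Halpha : alpha <> 0.
  by move=> H0; have := Hc i; rewrite cap_eq_alpha_spend H0; lra.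
by field.
Qed.

End Capped.

End Buyer.

Definition cap_weight (x : B -> G -> R) (i : B) : R :=
  if capped v c x i then norm_c v c p i else 1.

Lemma cap_weight_ge0 x i : 0 <= cap_weight x i.
Proof. by rewrite /cap_weight; case: capped; [exact: norm_c_ge0 | lra]. Qed.

Lemma ba_val_norm_le (x : B -> G -> R) i (S : {set G}) :
  demand_bundle v (@one_B B) c p i (x i) -> thrifty v p i (x i) ->
  modest v c i (x i) ->
  ba_val (norm_v v p) (norm_c v c p) i S <=
  \rprod_(j | j \in S) Rmax (p j) 1 * cap_weight x i *
  exp (\rsum_(j | j \in S) Rmin (p j) 1 - spend p (x i)).
Proof.
move=> Hdem Hthr Hmod; have [Hx [Hspend _]] := Hdem; rewrite /one_B in Hspend.
set P := \rprod_(j | j \in S) Rmax (p j) 1.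
set g := \rsum_(j | j \in S) Rmin (p j) 1.
set s := spend p (x i).
have HP : 1 <= P by apply: Rprod_ge1 => j _; exact: Rmax_r.
have Hg : 0 <= g by apply: Rsum_ge0 => j _; apply: Rmin_glb; [exact: Hp | lra].
have Hcw := cap_weight_ge0 x i.
rewrite /cap_weight /ba_val in Hcw *.
case HB0: (in_B0 v p i).
  rewrite capped_in_B0 // in Hcw *.
  rewrite /s (spend_thrifty_in_B0 HB0 Hthr Hx) Rminus_0_r.
  have Hexp : 1 <= exp g by have := exp_ineq1_le g; lra.
  apply: Rle_trans (Rmin_l _ _) _.
  have HPc : norm_c v c p i <= P * norm_c v c p i by nra.
  have : P * norm_c v c p i <= P * norm_c v c p i * exp g by nra.
  lra.
have Hsum : \rsum_(j | j \in S) norm_v v p i j <= P * g.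
  apply: Rle_trans (Rsum_le_Rprod_Rmax_Rsum_Rmin _ _ Hp).
  by apply: Rsum_le => j _; apply: norm_v_le_price; rewrite HB0.
case Hcap: (capped v c x i).
  move/negbT: HB0 => HB0.
  rewrite (norm_c_capped_not_B0 HB0 Hthr Hx Hmod Hcap) -/s in Hcw *.
  have Hspos : 0 < s := spend_gt0_capped_not_B0 HB0 Hthr Hx Hmod Hcap.
  have HminP : Rmin s (P * g) <= P * Rmin s g.
    by rewrite /Rmin; do 2 case: Rle_dec => ?; nra.
  apply: Rle_trans (Rle_min_compat_l _ _ s Hsum) _.
  apply: Rle_trans HminP _; rewrite Rmult_assoc.
  by apply: Rmult_le_compat_l; [lra | exact: Rmin_le_mul_exp].
have := le_exp_sub g Hspend; rewrite -/s => Hexp.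
have := Rmin_r (norm_c v c p i) (\rsum_(j | j \in S) norm_v v p i j); nra.
Qed.

(* Good j is sold out up to its modest supply min(1, 1/p_j) whenever p_j > 0. *)
Lemma Rmin_price_eq_earning (x : B -> G -> R) j :
  thrifty_modest_eq v (@one_B B) c (@one_G G) x p ->
  Rmin (p j) 1 = p j * \rsum_i x i j.
Proof.
move=> [_ [Hsupply [_ Hslack]]]; have := Hslack j; have := Hsupply j.
rewrite /modest_supply /one_G; case: Req_EM_T => Hpj /= Hle.
  by rewrite Hpj Rmin_left; lra.
have Hpos : 0 < p j by have := Hp j; lra.
case/Rmult_integral => [|Hsold]; first lra.
have {Hsold} -> : \rsum_i x i j = Rmin 1 (1 / p j) by lra.
have Hinv : p j * (1 / p j) = 1 by field; lra.
have Hinv_le : 1 <= 1 / p j <-> p j <= 1.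
  by split => H; [nra | rewrite -Hinv; nra].
rewrite /Rmin; case: Rle_dec => H1; case: Rle_dec => H2; try lra.
all: by exfalso; tauto.
Qed.

Lemma Rsum_Rmin_price_eq_spend (x : B -> G -> R) :
  thrifty_modest_eq v (@one_B B) c (@one_G G) x p ->
  \rsum_j Rmin (p j) 1 = \rsum_i spend p (x i).
Proof.
move=> Heq; rewrite /spend exchange_big /=; apply: eq_bigr => j _.
by rewrite (Rmin_price_eq_earning j Heq) Rsum_mull; apply: eq_bigr => i _; ring.
Qed.

End Normalization.

Theorem mainTheorem3 (B G : finType) (v : B -> G -> R) (c : B -> R)
  (x : B -> G -> R) (p : G -> R)
  (Hn : (0 < #|B|)%N) (Hnm : (#|B| <= #|G|)%N)
  (Hv : forall i j, 0 <= v i j) (Hc : forall i, 0 < c i)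
  (Hvc : forall i j, v i j <= c i)
  (Hmc : money_clearing v (@one_B B) (@one_G G))
  (Heq : thrifty_modest_eq v (@one_B B) c (@one_G G) x p)
  (S : B -> {set G}) (HS : allocation S) :
  NSW (norm_v v p) (norm_c v c p) S <=
  nroot #|B|
    ((\rprod_(i | capped v c x i) norm_c v c p i) *
     (\rprod_(j | Rltb 1 (p j)) p j)).
Proof.
have [Hp [_ [Hbuyers _]]] := Heq.
have Hval_ge0 i T : 0 <= ba_val (norm_v v p) (norm_c v c p) i T.
  by apply: ba_val_ge0 => [k j | k]; [exact: norm_v_ge0 | apply: norm_c_ge0].
pose price_factor i := \rprod_(j | j \in S i) Rmax (p j) 1.
pose slack i := \rsum_(j | j \in S i) Rmin (p j) 1 - spend p (x i).
have Hbuyer i : ba_val (norm_v v p) (norm_c v c p) i (S i) <=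
                price_factor i * cap_weight v c p x i * exp (slack i).
  by have [Hdem [Hthr Hmod]] := Hbuyers i; exact: ba_val_norm_le.
have Hprices1 : 1 <= \rprod_i price_factor i.
  by apply: Rprod_ge1 => i _; apply: Rprod_ge1 => j _; exact: Rmax_r.
have Hprices : \rprod_i price_factor i <= \rprod_(j | Rltb 1 (p j)) p j.
  apply: Rle_trans (Rprod_disjoint_le HS (fun j => Rmax_r _ _)) _.
  rewrite [X in _ <= X]big_mkcond; apply: Req_le; apply: eq_bigr => j _.
  by rewrite /Rmax; case: RltbP; case: Rle_dec => /=; lra.
have Hslack : exp (\rsum_i slack i) <= 1.
  rewrite -exp_0; apply: exp_le; rewrite /slack /Rminus big_split /=.
  rewrite -(big_morph Ropp Ropp_plus_distr Ropp_0) -(Rsum_Rmin_price_eq_spend Hp Heq).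
  have := Rsum_disjoint_le HS (fun j => Rmin_glb _ _ _ (Hp j) Rle_0_1); lra.
have Hweights : 0 <= \rprod_i cap_weight v c p x i.
  by apply: Rprod_ge0 => i _; apply: cap_weight_ge0.
apply: nroot_le; split; first by apply: Rprod_ge0 => i _.
apply: Rle_trans (Rprod_le _ (fun i _ => conj (Hval_ge0 i (S i)) (Hbuyer i))) _.
have -> : \rprod_(i | capped v c x i) norm_c v c p i = \rprod_i cap_weight v c p x i.
  by rewrite big_mkcond.
rewrite !big_split /= -exp_Rsum.
have : 0 <= \rprod_i price_factor i * \rprod_i cap_weight v c p x i by nra.
have := exp_pos (\rsum_i slack i); nra.
Qed.
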